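(* Let $n\ge 3$ be odd. For every self-dual code $C$ in $\mathbb{F}_2^{n+1}$, $\{A^{-1}:A\in\mathcal{F}_C\}=\mathcal{F}_C$.
   Context: $\mathbb{F}_2$ is the binary field. A code $C\subseteq\mathbb{F}_2^{n+1}$ is self-dual if $C=C^\perp$ (standard dot product); then $\dim C=m:=\frac{n+1}{2}$. For $\mathbf{y}\in\mathbb{F}_2^{n+1}$, $\underline{\mathbf{y}}\in\mathbb{F}_2^n$ is $\mathbf{y}$ with its last entry deleted; $\mathbf{x}^2:=\mathbf{x}\mathbf{x}^{\top}$. Let $\mathfrak{B}_C$ be the set of bases of $C$, $\mathfrak{B}_C^2$ those bases containing an even number of vectors with last entry $1$. For $\mathcal{B}=\{\mathbf{y}_1,\ldots,\mathbf{y}_m\}\in\mathfrak{B}_C$ put $A'_{\mathcal{B}}=I_n+\sum_{i=1}^m\underline{\mathbf{y}_i}^2$ and $A''_{\mathcal{B}}=I_n+\sum_{i=1}^m\underline{\mathbf{y}_i}^2+(\underline{\mathbf{y}_1}+\cdots+\underline{\mathbf{y}_m})^2$. Define $\mathcal{F}_C=\{A'_{\mathcal{B}}:\mathcal{B}\in\mathfrak{B}_C^2\}\cup\{A''_{\mathcal{B}}:\mathcal{B}\in\mathfrak{B}_C\}$ if $m$ is even, and $\mathcal{F}_C=\{A'_{\mathcal{B}}:\mathcal{B}\in\mathfrak{B}_C^2\}$ if $m$ is odd. (All these matrices are invertible over $\mathbb{F}_2$.) *)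

From HB Require Import structures.
From mathcomp Require Import all_boot all_order all_algebra all_fingroup.
Set Implicit Arguments. Unset Strict Implicit. Unset Printing Implicit Defensive.
Import GRing.Theory.
Local Open Scope ring_scope.

Definition under (n : nat) (y : 'rV['F_2]_(n.+1)) : 'rV['F_2]_n :=
  \row_(j < n) y 0 (widen_ord (leqnSn n) j).

(* x^2 := x x^T for x a (column) vector; with row vectors this is x^T x,
   an n x n matrix *)
Definition sqv (n : nat) (x : 'rV['F_2]_n) : 'M['F_2]_n := x^T *m x.

Definition dotv (k : nat) (u v : 'rV['F_2]_k) : 'F_2 := (u *m v^T) 0 0.

Definition self_dual (k : nat) (C : {set 'rV['F_2]_k}) : Prop :=
  0 \in C /\ (forall x y, x \in C -> y \in C -> x + y \in C) /\
  C = [set y | [forall x in C, dotv x y == 0]].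

Definition is_basis (m k : nat) (C : {set 'rV['F_2]_k}) (Y : 'M['F_2]_(m, k)) : Prop :=
  row_free Y /\ forall x : 'rV['F_2]_k, (x \in C) = (x <= Y)%MS.

Definition even_last (m n : nat) (Y : 'M['F_2]_(m, n.+1)) : bool :=
  ~~ odd #|[set i | Y i ord_max == 1]|.

Definition Aprime (m n : nat) (Y : 'M['F_2]_(m, n.+1)) : 'M['F_2]_n :=
  1%:M + \sum_(i < m) sqv (under (row i Y)).

Definition Asecond (m n : nat) (Y : 'M['F_2]_(m, n.+1)) : 'M['F_2]_n :=
  1%:M + \sum_(i < m) sqv (under (row i Y)) + sqv (\sum_(i < m) under (row i Y)).

Definition inFC (n : nat) (C : {set 'rV['F_2]_(n.+1)}) (A : 'M['F_2]_n) : Prop :=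
  let m := (n.+1)./2 in
  (exists Y : 'M['F_2]_(m, n.+1), [/\ is_basis C Y, even_last Y & A = Aprime Y])
  \/ (~~ odd m /\ exists Y : 'M['F_2]_(m, n.+1), is_basis C Y /\ A = Asecond Y).

From HB Require Import structures.
From mathcomp Require Import all_boot all_order all_algebra all_fingroup.
Local Open Scope ring_scope.
Set Implicit Arguments. Unset Strict Implicit. Unset Printing Implicit Defensive.
Import GRing.Theory.

(* Write a basis of C as the rows of Y = [U | c], with c the last column. Then
   A'_Y = I + U^T U and A''_Y = I + U^T (I + o o^T) U, with o the all-ones
   column, and a change of basis P turns A'_Y into I + U^T (P^T P) U.
   Self-duality says Y Y^T = 0, i.e. U U^T = c c^T over F_2, hence
   (I + U^T M U)(I + U^T N U) = I + U^T (M + N + M c c^T N) U.  For each of the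
   possible M one solves M + N + M c c^T N = 0 for N, and then either writes
   N = P^T P for an invertible P such that P c has even weight, or observes
   N = I + o o^T; either way the inverse lies in F_C again.  The identities
   between rank-one matrices x y^T needed for this are verified by expanding
   them and cancelling equal terms in pairs, as we are in characteristic 2. *)

Section ExponentTwo.
Variable V : nmodType.
Hypothesis addvv : forall v : V, v + v = 0.

Lemma sum_even_count_eq0 (I : eqType) (r : seq I) (F : I -> V) :
  all (fun i => ~~ odd (count_mem i r)) r -> \sum_(i <- r) F i = 0.
Proof.
move=> /allP even_r; rewrite -big_undup_iterop_count big1_seq // => i.
rewrite mem_undup => /andP[_ /even_r/even_halfK <-].
by rewrite Monoid.iteropE iter_addr_0 -mul2n mulrnA mulr2n addvv mul0rn.
Qed.

End ExponentTwo.

Ltac atoms S :=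
  lazymatch S with
  | ?x + ?r => let l := atoms r in constr:(x :: l)
  | ?x => constr:([:: x])
  end.

Ltac index_of a env :=
  lazymatch env with
  | a :: _ => constr:(0%N)
  | _ :: ?rest => let r := index_of a rest in constr:(r.+1)
  end.

Ltac indices S env :=
  lazymatch S with
  | ?x + ?r => let i := index_of x env in let l := indices r env in constr:(i :: l)
  | ?x => let i := index_of x env in constr:([:: i])
  end.

(* Proves [S = 0] for a right-nested sum [S] in a group of exponent 2: the summands
   are recorded as indices into the list of their syntactically distinct values, and
   it is checked by computation that every index occurs an even number of times. *)
Ltac cancel_pairs addvv :=
  rewrite -?addrA ?addr0 ?add0r;
  lazymatch goal with
  | |- 0 = 0 => reflexivity
  | |- ?S = 0 =>
    let env := atoms S in
    let ks := indices S env in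
    transitivity (\sum_(k <- ks) env`_k);
      [by rewrite !big_cons big_nil addr0 | apply: (sum_even_count_eq0 addvv); by vm_compute]
  end.

Lemma trmxD (R : pzSemiRingType) p q (A B : 'M[R]_(p, q)) : (A + B)^T = A^T + B^T.
Proof. exact: linearD. Qed.

Definition sandwich (R : pzRingType) m n (U : 'M[R]_(m, n)) (M : 'M[R]_m) : 'M[R]_n :=
  1%:M + U^T *m M *m U.
Definition twmul (R : pzRingType) m (K M N : 'M[R]_m) : 'M[R]_m := M + N + M *m K *m N.

Lemma sandwichM (R : pzRingType) m n (U : 'M[R]_(m, n)) M N :
  sandwich U M *m sandwich U N = sandwich U (twmul (U *m U^T) M N).
Proof.
rewrite /sandwich /twmul mulmxDl mul1mx !mulmxDr mulmx1 !mulmxDl !mulmxA.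
by rewrite -!addrA; congr (_ + _); exact: addrCA.
Qed.

Section RankOne.
Variables (R : comPzRingType) (m : nat).
Implicit Types x y z w : 'cV[R]_m.

Definition outer x y : 'M[R]_m := x *m y^T.
Definition dotc x y : R := (x^T *m y) 0 0.

Lemma dotcC x y : dotc x y = dotc y x.
Proof. by rewrite /dotc -[x^T *m y]trmxK trmx_mul trmxK mxE. Qed.

Lemma trmx_outer x y : (outer x y)^T = outer y x.
Proof. by rewrite /outer trmx_mul trmxK. Qed.

Lemma outerDl x y z : outer (x + y) z = outer x z + outer y z.
Proof. exact: mulmxDl. Qed.

Lemma outerDr x y z : outer z (x + y) = outer z x + outer z y.
Proof. by rewrite /outer trmxD mulmxDr. Qed.

Lemma mul_outer_col x y z : outer x y *m z = dotc y z *: x.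
Proof. by rewrite /outer -mulmxA [y^T *m z]mx11_scalar mul_mx_scalar. Qed.

Lemma mul_outer x y z w : outer x y *m outer z w = dotc y z *: outer x w.
Proof. by rewrite {1}/outer mulmxA mul_outer_col scalemxAl. Qed.

Lemma dotcE x y : dotc x y = \sum_i x i 0 * y i 0.
Proof. by rewrite /dotc mxE; apply: eq_bigr => i _; rewrite mxE. Qed.

Lemma dotc_delta t x : dotc (delta_mx t 0) x = x t 0.
Proof.
rewrite dotcE (bigD1 t) //= big1 => [|i /negbTE ti];
  by rewrite !mxE ?eqxx ?ti ?mul1r ?mul0r ?addr0.
Qed.

Lemma dotc_delta_delta t : dotc (delta_mx t 0) (delta_mx t 0 : 'cV[R]_m) = 1.
Proof. by rewrite dotc_delta mxE !eqxx. Qed.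

End RankOne.

Lemma mulmx1_invmx (R : comUnitRingType) n (A B : 'M[R]_n) : A *m B = 1%:M -> invmx A = B.
Proof.
move=> AB1; have [Aunit _] := mulmx1_unit AB1.
by rewrite -[invmx A]mulmx1 -AB1 mulmxA mulVmx ?mul1mx.
Qed.

Lemma invmx_sandwich (R : comUnitRingType) m n (U : 'M[R]_(m, n)) c M N :
  U *m U^T = outer c c -> twmul (outer c c) M N = 0 -> invmx (sandwich U M) = sandwich U N.
Proof.
move=> UUt MN0; apply: mulmx1_invmx.
by rewrite sandwichM UUt MN0 /sandwich mulmx0 mul0mx addr0.
Qed.

Ltac expand_outer facts :=
  repeat progress rewrite ?trmxD ?trmx1 ?trmx_outer ?outerDl ?outerDr ?mulmxDl ?mulmxDr
    ?mul1mx ?mulmx1 ?mul_outer ?mul_outer_col ?facts ?scale0r ?scale1r ?mul0mx ?mulmx0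
    ?addr0 ?add0r.

Section Char2.
Variables (R : comNzRingType) (m : nat).
Hypothesis R2 : (2 \in [pchar R])%N.
Implicit Types c o e : 'cV[R]_m.

Lemma addmx_xx p q (A : 'M[R]_(p, q)) : A + A = 0.
Proof. by rewrite -mulr2n -scaler_nat (pcharf0 R2) scale0r. Qed.

Lemma addmx_eq0_eq p q (A B : 'M[R]_(p, q)) : A + B = 0 -> A = B.
Proof. by move=> AB0; rewrite -[B]add0r -AB0 -addrA addmx_xx addr0. Qed.

Ltac char2_mx facts :=
  lazymatch goal with |- @eq (matrix _ ?p ?q) _ _ =>
    apply: addmx_eq0_eq; expand_outer facts;
    (* identity matrices reached along different coercion paths must be made
       syntactically equal for [cancel_pairs] *)
    try rewrite -[1%:M]/(1%:M : 'M[R]_m);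
    cancel_pairs (@addmx_xx p q)
  end.

Lemma twmul_1 c : dotc c c = 0 -> twmul (outer c c) 1%:M (1%:M + outer c c) = 0.
Proof. by move=> cc; rewrite /twmul; char2_mx cc. Qed.

Lemma twmul_oo_even o c : dotc o o = 0 -> dotc o c = 0 -> dotc c c = 0 ->
  twmul (outer c c) (1%:M + outer o o) (1%:M + outer o o + outer c c) = 0.
Proof.
move=> oo oc cc; have co : dotc c o = 0 by rewrite dotcC.
by rewrite /twmul; char2_mx (oo, oc, co, cc).
Qed.

Lemma twmul_oo_odd o c : dotc o o = 0 -> dotc o c = 1 -> dotc c c = 1 ->
  twmul (outer c c) (1%:M + outer o o) (1%:M + outer o o + outer (c + o) (c + o)) = 0.
Proof.
move=> oo oc cc; have co : dotc c o = 1 by rewrite dotcC.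
by rewrite /twmul; char2_mx (oo, oc, co, cc).
Qed.

Lemma gram_factor_cc c e : dotc c c = 0 -> dotc e c = 0 -> dotc e e = 1 ->
  let P := 1%:M + outer c e + outer e c in
  [/\ P^T *m P = 1%:M + outer c c, P *m c = c & P *m (P *m (1%:M + outer c c)) = 1%:M].
Proof.
move=> cc ec ee P; have ce : dotc c e = 0 by rewrite dotcC.
by rewrite /P; split; char2_mx (cc, ec, ce, ee).
Qed.

Lemma gram_factor_oo_cc o c e :
  dotc o o = 0 -> dotc o c = 0 -> dotc c c = 0 ->
  dotc e o = 1 -> dotc e c = 1 -> dotc e e = 1 ->
  let P := 1%:M + outer (o + c) e + outer (c + e) (o + c) in
  [/\ P^T *m P = 1%:M + outer o o + outer c c, P *m c = o & P *m P = 1%:M].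
Proof.
move=> oo oc cc eo ec ee P.
have [co oe ce] : [/\ dotc c o = 0, dotc o e = 1 & dotc c e = 1] by rewrite !(dotcC _ e) dotcC.
by rewrite /P; split; char2_mx (oo, oc, co, cc, eo, oe, ec, ce, ee).
Qed.

Lemma gram_factor_oo_co o c : dotc o o = 0 -> dotc o c = 1 -> dotc c c = 1 ->
  let P := 1%:M + outer (c + o) c in
  [/\ P^T *m P = 1%:M + outer o o + outer (c + o) (c + o), P *m c = o & P *m P = 1%:M].
Proof.
move=> oo oc cc P; have co : dotc c o = 1 by rewrite dotcC.
by rewrite /P; split; char2_mx (oo, oc, co, cc).
Qed.

End Char2.

Lemma F2P (x : 'F_2) : x = 0 \/ x = 1.
Proof. by case: x => [[|[|k]] // lt_k2]; [left | right]; apply: val_inj. Qed.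

Lemma F2_mulxx (x : 'F_2) : x * x = x.
Proof. by case: (F2P x) => ->; rewrite ?mul0r ?mulr1. Qed.

Lemma F2_natr k : k%:R = (odd k)%:R :> 'F_2.
Proof. by rewrite -modn2 Fp_nat_mod. Qed.

Lemma F2_sum_card (I : finType) (F : I -> 'F_2) : \sum_i F i = #|[set i | F i == 1]|%:R.
Proof.
rewrite -sum1dep_card natr_sum [RHS]big_mkcond; apply: eq_bigr => i _.
by case: (F2P (F i)) => ->.
Qed.

Lemma F2_pchar : (2 \in [pchar 'F_2])%N.
Proof. exact: pchar_Fp. Qed.

Lemma F2_col_constP m (c : 'cV['F_2]_m) b : c = const_mx b \/ exists t, c t 0 = 1 - b.
Proof.
have [t ct | c_b] := pickP (fun t => c t 0 != b); [right; exists t | left].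
  by move: ct; case: (F2P (c t 0)) => ->; case: (F2P b) => ->; rewrite ?subr0 ?subrr.
by apply/matrixP => i j; rewrite ord1 [RHS]mxE; move: (c_b i) => /= /negbFE /eqP.
Qed.

Section Codes.
Variables (m n : nat).
Implicit Types (Y : 'M['F_2]_(m, n.+1)) (P : 'M['F_2]_m) (c : 'cV['F_2]_m).

Local Notation ones := (const_mx 1 : 'cV['F_2]_m).

Definition undermx Y : 'M['F_2]_(m, n) := \matrix_i under (row i Y).
Definition lastcol Y : 'cV['F_2]_m := \col_i Y i ord_max.

Lemma undermx_mul P Y : undermx (P *m Y) = P *m undermx Y.
Proof. by apply/matrixP => i j; rewrite !mxE; apply: eq_bigr => k _; rewrite !mxE. Qed.

Lemma lastcol_mul P Y : lastcol (P *m Y) = P *m lastcol Y.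
Proof. by apply/matrixP => i j; rewrite !mxE; apply: eq_bigr => k _; rewrite !mxE. Qed.

Lemma AprimeE Y : Aprime Y = sandwich (undermx Y) 1%:M.
Proof.
rewrite /Aprime /sandwich mulmx1; congr (_ + _); apply/matrixP => i j.
by rewrite summxE !mxE; apply: eq_bigr => k _; rewrite !mxE big_ord1 !mxE.
Qed.

Lemma Aprime_mul P Y : Aprime (P *m Y) = sandwich (undermx Y) (P^T *m P).
Proof. by rewrite AprimeE /sandwich undermx_mul mulmx1 trmx_mul !mulmxA. Qed.

Lemma AsecondE Y : Asecond Y = sandwich (undermx Y) (1%:M + outer ones ones).
Proof.
have sum_rows : \sum_i under (row i Y) = ones^T *m undermx Y.
  by rewrite mulmx_sum_row; apply: eq_bigr => i _; rewrite !mxE scale1r rowK.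
rewrite /Asecond -/(Aprime Y) AprimeE sum_rows /sandwich /sqv /outer.
by rewrite trmx_mul trmxK !mulmxDr !mulmxDl !mulmxA addrA.
Qed.

Lemma dotc_ones : dotc ones ones = (odd m)%:R.
Proof.
rewrite dotcE (eq_bigr (fun=> 1)) => [|i _]; last by rewrite !mxE mulr1.
by rewrite sumr_const card_ord -F2_natr.
Qed.

Lemma dotcxx_F2 c : dotc c c = dotc ones c.
Proof. by rewrite !dotcE; apply: eq_bigr => i _; rewrite F2_mulxx mxE mul1r. Qed.

Lemma even_lastE Y : even_last Y = (dotc (lastcol Y) (lastcol Y) == 0).
Proof.
rewrite dotcxx_F2 dotcE (eq_bigr (fun i => Y i ord_max)) => [|i _]; last by rewrite !mxE mul1r.
by rewrite F2_sum_card F2_natr /even_last; case: odd.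
Qed.

Lemma mulmx_trmx_split Y :
  Y *m Y^T = undermx Y *m (undermx Y)^T + outer (lastcol Y) (lastcol Y).
Proof.
apply/matrixP => i j; rewrite !mxE big_ord_recr /=; congr (_ + _).
  by apply: eq_bigr => k _; rewrite !mxE.
by rewrite !mxE big_ord1 !mxE.
Qed.

End Codes.

Section Bases.
Variables (m n : nat) (C : {set 'rV['F_2]_n.+1}).
Implicit Types (Y : 'M['F_2]_(m, n.+1)) (P : 'M['F_2]_m).

Lemma self_dual_gram Y : self_dual C -> is_basis C Y -> Y *m Y^T = 0.
Proof.
move=> [_ [_ C_perp]] [_ C_span]; apply/matrixP => i j.
have rowC k : row k Y \in C by rewrite C_span row_sub.
have := rowC j; rewrite {1}C_perp inE => /forallP/(_ (row i Y)).
rewrite rowC /= /dotv => /eqP dot0.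
by rewrite !mxE -[RHS]dot0 !mxE; apply: eq_bigr => k _; rewrite !mxE.
Qed.

Lemma self_dual_outer Y : self_dual C -> is_basis C Y ->
  undermx Y *m (undermx Y)^T = outer (lastcol Y) (lastcol Y).
Proof.
move=> C_sd Ybasis; apply: (addmx_eq0_eq F2_pchar).
by rewrite -mulmx_trmx_split self_dual_gram.
Qed.

Lemma is_basis_mul P Y : is_basis C Y -> P \in unitmx -> is_basis C (P *m Y).
Proof.
move=> [Yfree Yspan] Punit; have Pfull : row_full P by rewrite row_full_unit.
by split => [|x]; rewrite ?Yspan /row_free (eqmxMfull Y Pfull).
Qed.

End Bases.

Section InverseClosure.
Variables (n : nat) (C : {set 'rV['F_2]_n.+1}).
Hypothesis C_self_dual : self_dual C.
Local Notation m := (n.+1)./2.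
Local Notation ones := (const_mx 1 : 'cV['F_2]_m).
Implicit Types Y : 'M['F_2]_(m, n.+1).

Lemma inFC_congr Y (P Q : 'M['F_2]_m) : is_basis C Y -> P *m Q = 1%:M ->
  dotc (P *m lastcol Y) (P *m lastcol Y) = 0 -> inFC C (sandwich (undermx Y) (P^T *m P)).
Proof.
move=> Ybasis PQ1 Pc_even; left; exists (P *m Y); split.
- exact: is_basis_mul Ybasis (mulmx1_unit PQ1).1.
- by rewrite even_lastE lastcol_mul Pc_even.
- by rewrite Aprime_mul.
Qed.

Lemma inFC_Asecond Y : is_basis C Y -> ~~ odd m ->
  inFC C (sandwich (undermx Y) (1%:M + outer ones ones)).
Proof. by move=> Ybasis m_even; right; split => //; exists Y; rewrite AsecondE. Qed.

Lemma inFC_inv_Aprime Y : is_basis C Y -> even_last Y -> inFC C (invmx (Aprime Y)).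
Proof.
move=> Ybasis; rewrite even_lastE => /eqP cc.
have UUt := self_dual_outer C_self_dual Ybasis.
set c := lastcol Y in cc UUt *.
rewrite AprimeE (invmx_sandwich UUt (twmul_1 F2_pchar cc)).
have [c_ones | [t ct0]] := F2_col_constP c 1.
  rewrite c_ones; apply: inFC_Asecond Ybasis _.
  by move: cc; rewrite c_ones dotc_ones; case: odd.
rewrite subrr -(dotc_delta t) in ct0.
have [PtP Pc PQ1] := gram_factor_cc F2_pchar cc ct0 (dotc_delta_delta _ t).
by rewrite -PtP; apply: inFC_congr Ybasis PQ1 _; rewrite Pc.
Qed.

Lemma inFC_inv_Asecond Y : is_basis C Y -> ~~ odd m -> inFC C (invmx (Asecond Y)).
Proof.
move=> Ybasis m_even; have UUt := self_dual_outer C_self_dual Ybasis.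
set c := lastcol Y in UUt *.
have oo : dotc ones ones = 0 by rewrite dotc_ones (negbTE m_even).
have cc := dotcxx_F2 c; rewrite AsecondE.
case: (F2P (dotc ones c)) => oc; rewrite oc in cc.
- rewrite (invmx_sandwich UUt (twmul_oo_even F2_pchar oo oc cc)).
  have [c0 | [t ct1]] := F2_col_constP c 0.
    by rewrite c0 /outer mul0mx addr0; apply: inFC_Asecond.
  have ec : dotc (delta_mx t 0) c = 1 by rewrite dotc_delta ct1 subr0.
  have eo : dotc (delta_mx t 0) ones = 1 by rewrite dotc_delta mxE.
  have [PtP Pc PP1] := gram_factor_oo_cc F2_pchar oo oc cc eo ec (dotc_delta_delta _ t).
  by rewrite -PtP; apply: inFC_congr Ybasis PP1 _; rewrite Pc.
- rewrite (invmx_sandwich UUt (twmul_oo_odd F2_pchar oo oc cc)).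
  have [PtP Pc PP1] := gram_factor_oo_co F2_pchar oo oc cc.
  by rewrite -PtP; apply: inFC_congr Ybasis PP1 _; rewrite Pc.
Qed.

Lemma inFC_invmx A : inFC C A -> inFC C (invmx A).
Proof.
case=> [[Y [Ybasis Yeven ->]] | [m_even [Y [Ybasis ->]]]].
  exact: inFC_inv_Aprime.
exact: inFC_inv_Asecond.
Qed.

End InverseClosure.

Theorem theorem8p6 (n : nat) (hodd : odd n) (hn : (3 <= n)%N)
  (C : {set 'rV['F_2]_(n.+1)}) (hC : self_dual C) (A : 'M['F_2]_n) :
  (exists B : 'M['F_2]_n, inFC C B /\ A = invmx B) <-> inFC C A.
Proof.
split=> [[B [FB ->]] | FA]; first exact: inFC_invmx.
by exists (invmx A); rewrite invmxK; split=> //; apply: inFC_invmx.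
Qed.
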